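(* In the $\ell^2$ linear social choice setting, on every instance with $n$ voters the uniform projection rule $f_{\mathrm{UProj2}}$ satisfies $\mathbb{E}_{c\sim f_{\mathrm{UProj2}}}[\mathrm{UW}(c)]\ge\frac nd$. Consequently $\mathrm{D}(f_{\mathrm{UProj2}})=O(d)$.
   Context: Setting ($\ell^2$ linear social choice). Fix a dimension $d$. An instance consists of $n$ voters and $m$ candidates, each a vector in $\mathbb{R}^d_{\ge 0}$ with Euclidean norm $1$ (superscripts denote coordinates), with every voter vector in $\mathrm{Cone}(C)$ (nonnegative linear combinations of the candidate vectors $C$). Utility $u_v(c)=v^\top c$; voters report consistent rankings; $\mathrm{UW}(c)=\sum_v u_v(c)$. A randomized rule may use the profile and candidate vectors but not the voter vectors. Distortion on an instance: $\max_c\mathrm{UW}(c)/\mathbb{E}_{c\sim f}[\mathrm{UW}(c)]$; $\mathrm{D}(f)$ is the supremum over instances, as a function of $d$. Uniform projection rule $f_{\mathrm{UProj2}}$: with $\mu_2=(1/\sqrt d,\dots,1/\sqrt d)$, output a distribution $(p_c)_{c\in C}$ such that $\hat c=\sum_c p_c c$ minimizes $\mathrm{KL}(\mu_2\|x)=\sum_{i=1}^d\mu_2^i\ln(\mu_2^i/x^i)$ over $x\in\mathrm{CH}(C)$, the convex hull of $C$. *)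

From mathcomp Require Import all_boot all_order all_algebra.
From mathcomp Require Import all_classical all_reals all_analysis.
Set Implicit Arguments. Unset Strict Implicit. Unset Printing Implicit Defensive.
Import Order.TTheory GRing.Theory Num.Theory.
Local Open Scope ring_scope.

Section Defs.
Variable R : realType.

Definition vecR (d : nat) := 'I_d -> R.

Definition unit_nonneg (d : nat) (x : vecR d) : Prop :=
  (forall i, 0 <= x i) /\ \sum_(i < d) x i ^+ 2 = 1.

Definition dotR (d : nat) (x y : vecR d) : R := \sum_(i < d) x i * y i.

Definition lincomb (d m : nat) (C : 'I_m -> vecR d) (a : 'I_m -> R) : vecR d :=
  fun i => \sum_(c < m) a c * C c i.

Definition is_distr (m : nat) (p : 'I_m -> R) : Prop :=
  (forall c, 0 <= p c) /\ \sum_(c < m) p c = 1.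

Definition in_cone (d m : nat) (C : 'I_m -> vecR d) (v : vecR d) : Prop :=
  exists a : 'I_m -> R, (forall c, 0 <= a c) /\ v = lincomb C a.

Definition in_hull (d m : nat) (C : 'I_m -> vecR d) (x : vecR d) : Prop :=
  exists q : 'I_m -> R, is_distr q /\ x = lincomb C q.

Definition instance (d n m : nat) (V : 'I_n -> vecR d) (C : 'I_m -> vecR d) : Prop :=
  (forall c, unit_nonneg (C c)) /\
  (forall v, unit_nonneg (V v)) /\
  (forall v, in_cone C (V v)).

Definition UW (d n m : nat) (V : 'I_n -> vecR d) (C : 'I_m -> vecR d) (c : 'I_m) : R :=
  \sum_(v < n) dotR (V v) (C c).

Definition EUW (d n m : nat) (V : 'I_n -> vecR d) (C : 'I_m -> vecR d) (p : 'I_m -> R) : R :=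
  \sum_(c < m) p c * UW V C c.

Definition distortion (d n m : nat) (V : 'I_n -> vecR d) (C : 'I_m -> vecR d)
  (p : 'I_m -> R) : R :=
  (\big[Num.max/0]_(c < m) UW V C c) / EUW V C p.

Definition mu2 (d : nat) : vecR d := fun _ => (Num.sqrt (d%:R))^-1.
Arguments mu2 d : clear implicits.

(* KL(mu || x) = sum_i mu^i ln(mu^i / x^i); its domain is x with all x^i > 0
   (outside it the divergence is +oo). *)
Definition KL (d : nat) (mu x : vecR d) : R :=
  \sum_(i < d) mu i * ln (mu i / x i).

Definition pos_vec (d : nat) (x : vecR d) : Prop := forall i, 0 < x i.

(* p is an output of the uniform projection rule f_UProj2: p is a distribution
   whose mean c_hat minimizes KL(mu2 || x) over x in CH(C) (over the domain of
   KL, i.e. c_hat has positive coordinates, compared with all x in CH(C) having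
   positive coordinates; points with a zero coordinate have KL = +oo). *)
Definition UProj2_output (d m : nat) (C : 'I_m -> vecR d) (p : 'I_m -> R) : Prop :=
  is_distr p /\
  pos_vec (lincomb C p) /\
  (forall x, in_hull C x -> pos_vec x -> KL (mu2 d) (lincomb C p) <= KL (mu2 d) x).

End Defs.

From mathcomp Require Import all_boot all_order all_algebra.
From mathcomp Require Import all_classical all_reals all_analysis.
From mathcomp Require Import ring lra.
Import Order.TTheory GRing.Theory Num.Theory.
Local Open Scope ring_scope.

(* Let x be the mean of the output distribution.  Moving x a little towards a
   candidate c stays in the hull, so first-order optimality of x for KL(mu2 || .)
   gives sum_i c_i / x_i <= d.  With the AM-GM bound 2 c_i <= d c_i x_i + c_i / (d x_i)
   and sum_i c_i >= 1 (a nonnegative unit vector has l1 norm at least 1) this yields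
   <c, x> >= (sum_i c_i) / d for every candidate.  A voter is a nonnegative
   combination of candidates, hence <v, x> >= (sum_i v_i) / d >= 1 / d, and summing
   over voters gives EUW >= n / d.  As every UW(c) is at most n, the distortion is at
   most d. *)

Section Elementary.
Context {R : realType}.
Implicit Types a c t u x y S Q : R.

Lemma ln_le_subr1 y : 0 < y -> ln y <= y - 1.
Proof. by move=> y_gt0; rewrite -[in ln y](subrKC 1 y) le_ln1Dx // ltrBrDl addrN. Qed.

Lemma le0_of_le_small_mul S Q : 0 <= Q ->
  (forall t, 0 < t -> t <= 1 / 2 -> S <= t * Q) -> S <= 0.
Proof.
move=> Q_ge0 S_le; apply/ler_addgt0Pr => e e_gt0; rewrite add0r.
have D_gt0 : 0 < 2 * e + Q + 1 by lra.
apply: le_trans (S_le (e / (2 * e + Q + 1)) _ _) _.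
- exact: divr_gt0.
- by rewrite ler_pdivrMr //; lra.
- by rewrite mulrAC ler_pdivrMr // ler_pM2l //; lra.
Qed.

Lemma inv1D_le_quadratic t u : -1 <= u -> 0 < t -> t <= 1 / 2 ->
  (1 + t * u)^-1 <= 1 - t * u + 2 * t ^+ 2 * u ^+ 2.
Proof.
move=> u_ge t_gt0 t_le; have D_gt0 : 0 < 1 + t * u by nra.
rewrite -subr_ge0.
have -> : 1 - t * u + 2 * t ^+ 2 * u ^+ 2 - (1 + t * u)^-1 =
          (t * u) ^+ 2 * (1 + 2 * t * u) / (1 + t * u).
  by field; rewrite gt_eqF.
apply: divr_ge0; last exact: ltW.
by apply: mulr_ge0; [exact: sqr_ge0 | nra].
Qed.

Lemma sum_delta_mull {I : finType} (c : I) (F : I -> R) :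
  \sum_(k : I) (k == c)%:R * F k = F c.
Proof.
by rewrite (bigD1 c) //= eqxx mul1r big1 ?addr0 // => k /negbTE ->; rewrite mul0r.
Qed.

Lemma amgm_mul a x c : 0 < a -> 0 < x -> 0 <= c -> 2 * c <= a * (c * x) + c / x / a.
Proof.
move=> a_gt0 x_gt0 c_ge0; rewrite -subr_ge0.
have -> : a * (c * x) + c / x / a - 2 * c = c * (a * x - 1) ^+ 2 / (x * a).
  by field; rewrite ?gt_eqF.
apply: divr_ge0; first by rewrite mulr_ge0 ?sqr_ge0.
by rewrite ltW // mulr_gt0.
Qed.

End Elementary.

Section Projection.
Context {R : realType} {d m : nat} (C : 'I_m -> vecR R d).

Lemma mu2_pos : pos_vec (@mu2 R d).
Proof.
move=> i; have d_gt0 : (0 < d)%N by apply: leq_ltn_trans (ltn_ord i).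
by rewrite invr_gt0 sqrtr_gt0 ltr0n.
Qed.

Lemma KL_le_add_ratio {mu x y : vecR R d} : pos_vec mu -> pos_vec x -> pos_vec y ->
  KL mu y <= KL mu x + \sum_(i < d) mu i * (x i / y i - 1).
Proof.
move=> mu_gt0 x_gt0 y_gt0; rewrite /KL -big_split /=; apply: ler_sum => i _.
rewrite -mulrDr ler_pM2l // !ln_div ?posrE //.
have := ln_le_subr1 _ (divr_gt0 (x_gt0 i) (y_gt0 i)); rewrite ln_div ?posrE //; lra.
Qed.

Lemma UProj2_first_order {p : 'I_m -> R} {y : vecR R d} :
  (0 < d)%N -> UProj2_output C p -> in_hull C y -> pos_vec y ->
  0 <= \sum_(i < d) (lincomb C p i / y i - 1).
Proof.
move=> d_gt0 [_ [x_gt0 x_opt]] y_hull y_gt0.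
have mu_gt0 : 0 < (Num.sqrt (d%:R : R))^-1 by rewrite invr_gt0 sqrtr_gt0 ltr0n.
rewrite -(pmulr_rge0 _ mu_gt0) mulr_sumr.
have := KL_le_add_ratio mu2_pos x_gt0 y_gt0.
have := x_opt y y_hull y_gt0; lra.
Qed.

Lemma in_hull_segment (p : 'I_m -> R) (c : 'I_m) t : is_distr p -> 0 <= t <= 1 ->
  in_hull C (fun i => (1 - t) * lincomb C p i + t * C c i).
Proof.
move=> [p_ge0 p_sum1] /andP[t_ge0 t_le1].
exists (fun k => (1 - t) * p k + t * (k == c)%:R); split; first split.
- by move=> k; rewrite addr_ge0 ?mulr_ge0 // subr_ge0.
- have sum_delta1 : \sum_(k < m) (k == c)%:R = 1 :> R.
    by rewrite -[RHS](sum_delta_mull c (fun=> 1)); apply: eq_bigr => k _; rewrite mulr1.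
  by rewrite big_split /= -!mulr_sumr p_sum1 sum_delta1 !mulr1 subrK.
apply/funext => i; rewrite /lincomb.
under [RHS]eq_bigr do rewrite mulrDl -!mulrA.
by rewrite big_split /= -!mulr_sumr sum_delta_mull.
Qed.

Lemma UProj2_sum_ratio_le (p : 'I_m -> R) (c : 'I_m) :
  (0 < d)%N -> (forall i, 0 <= C c i) -> UProj2_output C p ->
  \sum_(i < d) C c i / lincomb C p i <= d%:R.
Proof.
move=> d_gt0 c_ge0 p_opt; have [p_distr [x_gt0 _]] := p_opt.
set x := lincomb C p in x_gt0 *.
pose u i := (C c i - x i) / x i.
have u_ge : forall i, -1 <= u i.
  move=> i; rewrite /u mulrBl divff ?gt_eqF //.
  by have := divr_ge0 (c_ge0 i) (ltW (x_gt0 i)); lra.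
have sum_u_le0 : \sum_(i < d) u i <= 0.
  apply: (le0_of_le_small_mul _ (2 * \sum_(i < d) u i ^+ 2)).
    by rewrite mulr_ge0 // sumr_ge0 // => i _; rewrite sqr_ge0.
  move=> t t_gt0 t_le.
  (* For y = (1 - t) x + t c, x_i / y_i = 1 / (1 + t u_i) <= 1 - t u_i + 2 t^2 u_i^2,
     so the optimality of x gives t * sum u <= 2 t^2 * sum u^2. *)
  pose y i := (1 - t) * x i + t * C c i.
  have yE i : y i = x i * (1 + t * u i) by rewrite /y /u; field; rewrite gt_eqF.
  have y_gt0 : pos_vec y.
    by move=> i; rewrite yE mulr_gt0 //; have := u_ge i; nra.
  have ratio_le i : x i / y i - 1 <= - (t * u i) + 2 * t ^+ 2 * u i ^+ 2.
    rewrite yE invfM mulrA divff ?gt_eqF // mul1r lerBlDl addrA.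
    exact: inv1D_le_quadratic.
  have := UProj2_first_order d_gt0 p_opt (in_hull_segment _ c _ p_distr _) y_gt0.
  have -> : 0 <= t <= 1 by rewrite ltW //=; lra.
  move=> /(_ isT) /le_trans /(_ (ler_sum _ (fun i _ => ratio_le i))).
  rewrite big_split /= sumrN -!mulr_sumr => sum_ge0; rewrite -(ler_pM2l t_gt0).
  have : t * (t * (2 * \sum_i u i ^+ 2)) = 2 * t ^+ 2 * \sum_i u i ^+ 2 by ring.
  lra.
have : \sum_(i < d) u i = \sum_(i < d) (C c i / x i - 1).
  by apply: eq_bigr => i _; rewrite /u mulrBl divff ?gt_eqF.
rewrite sumrB sumr_const card_ord; lra.
Qed.

End Projection.

Section Welfare.
Context {R : realType} {d : nat}.
Implicit Types x y : vecR R d.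

Lemma unit_nonneg_le1 {x} i : unit_nonneg x -> x i <= 1.
Proof.
move=> [x_ge0 x_norm]; have : x i ^+ 2 <= 1.
  by rewrite -x_norm (bigD1 i) //= lerDl sumr_ge0 // => j _; rewrite sqr_ge0.
by have := x_ge0 i; nra.
Qed.

Lemma unit_nonneg_sum_ge1 {x} : unit_nonneg x -> 1 <= \sum_(i < d) x i.
Proof.
move=> x_unit; have [x_ge0 x_norm] := x_unit.
rewrite -x_norm ler_sum // => i _.
by have := unit_nonneg_le1 i x_unit; have := x_ge0 i; nra.
Qed.

Lemma dotRC x y : dotR x y = dotR y x.
Proof. by apply: eq_bigr => i _; rewrite mulrC. Qed.

Lemma dotR_unit_le1 x y : unit_nonneg x -> unit_nonneg y -> dotR x y <= 1.
Proof.
move=> [_ x_norm] [_ y_norm].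
have : 2 * dotR x y <= \sum_(i < d) x i ^+ 2 + \sum_(i < d) y i ^+ 2.
  rewrite -big_split mulr_sumr /= ler_sum // => i _.
  have -> : x i ^+ 2 + y i ^+ 2 = 2 * (x i * y i) + (x i - y i) ^+ 2 by ring.
  by rewrite lerDl sqr_ge0.
by rewrite x_norm y_norm; lra.
Qed.

Lemma dotR_lincomb_l m (C : 'I_m -> vecR R d) (a : 'I_m -> R) y :
  dotR (lincomb C a) y = \sum_(c < m) a c * dotR (C c) y.
Proof.
rewrite /dotR /lincomb; under eq_bigr do rewrite mulr_suml.
rewrite exchange_big; apply: eq_bigr => c _.
by rewrite mulr_sumr; apply: eq_bigr => i _; rewrite mulrA.
Qed.

Lemma sum_lincomb m (C : 'I_m -> vecR R d) (a : 'I_m -> R) :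
  \sum_(i < d) lincomb C a i = \sum_(c < m) a c * \sum_(i < d) C c i.
Proof.
by rewrite /lincomb exchange_big; apply: eq_bigr => c _; rewrite mulr_sumr.
Qed.

Section OptimalMean.
Variables (m : nat) (C : 'I_m -> vecR R d) (p : 'I_m -> R).
Hypotheses (d_gt0 : (0 < d)%N) (C_unit : forall c, unit_nonneg (C c))
  (p_opt : UProj2_output C p).

Lemma UProj2_candidate_dotR_ge c :
  (\sum_(i < d) C c i) / d%:R <= dotR (C c) (lincomb C p).
Proof.
have [c_ge0 _] := C_unit c; have [_ [x_gt0 _]] := p_opt.
have d_pos : 0 < d%:R :> R by rewrite ltr0n.
have ratio_le : (\sum_(i < d) C c i / lincomb C p i) / d%:R <= 1.
  by rewrite ler_pdivrMr // mul1r UProj2_sum_ratio_le.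
have amgm : 2 * \sum_(i < d) C c i <=
    d%:R * dotR (C c) (lincomb C p) + (\sum_(i < d) C c i / lincomb C p i) / d%:R.
  rewrite /dotR !mulr_sumr mulr_suml -big_split /= ler_sum // => i _.
  exact: amgm_mul.
have := unit_nonneg_sum_ge1 (C_unit c).
rewrite ler_pdivrMr //; lra.
Qed.

Lemma UProj2_voter_dotR_ge v : unit_nonneg v -> in_cone C v ->
  d%:R^-1 <= dotR v (lincomb C p).
Proof.
move=> v_unit [a [a_ge0 v_eq]]; rewrite v_eq dotR_lincomb_l.
apply: le_trans (ler_sum _ (fun c _ => ler_wpM2l (a_ge0 c) (UProj2_candidate_dotR_ge c))).
under eq_bigr do rewrite mulrA; rewrite -mulr_suml -sum_lincomb.
by rewrite -v_eq -[X in X <= _]mul1r ler_wpM2r ?invr_ge0 // unit_nonneg_sum_ge1.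
Qed.

End OptimalMean.

Variables (n m : nat) (V : 'I_n -> vecR R d) (C : 'I_m -> vecR R d).

Lemma EUW_sum_dotR p : EUW V C p = \sum_(v < n) dotR (V v) (lincomb C p).
Proof.
rewrite /EUW /UW; under eq_bigr do rewrite mulr_sumr.
rewrite exchange_big; apply: eq_bigr => v _.
by rewrite dotRC dotR_lincomb_l; apply: eq_bigr => c _; rewrite dotRC.
Qed.

Lemma UW_le_voters c : instance V C -> UW V C c <= n%:R.
Proof.
move=> [C_unit [V_unit _]].
rewrite -[n in n%:R]card_ord -sumr_const ler_sum // => v _.
exact: dotR_unit_le1.
Qed.

Lemma UProj2_EUW_ge p : instance V C -> UProj2_output C p -> n%:R / d%:R <= EUW V C p.
Proof.
move=> [C_unit [V_unit V_cone]] p_opt; have [_ [x_gt0 _]] := p_opt.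
rewrite EUW_sum_dotR; have [d0 | d_gt0] := posnP d.
  rewrite [k in _ / k%:R]d0 invr0 mulr0 sumr_ge0 // => v _.
  have [V_ge0 _] := V_unit v.
  by rewrite sumr_ge0 // => i _; rewrite mulr_ge0 ?V_ge0 ?(ltW (x_gt0 i)).
rewrite -[n in n%:R]card_ord -sumr_const mulr_suml ler_sum // => v _.
by rewrite mul1r UProj2_voter_dotR_ge.
Qed.

Lemma UProj2_distortion_le p : (0 < d)%N -> instance V C -> UProj2_output C p ->
  distortion V C p <= d%:R.
Proof.
move=> d_gt0 inst p_opt; rewrite /distortion.
have max_le : \big[Num.max/0]_(c < m) UW V C c <= n%:R.
  by apply: bigmax_le => // c _; exact: UW_le_voters.
have EUW_ge := UProj2_EUW_ge p inst p_opt.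
have [-> | EUW_neq0] := eqVneq (EUW V C p) 0; first by rewrite invr0 mulr0.
have EUW_gt0 : 0 < EUW V C p.
  by rewrite lt_def EUW_neq0 (le_trans _ EUW_ge) // divr_ge0.
rewrite ler_pdivrMr // (le_trans max_le) //.
by move: EUW_ge; rewrite ler_pdivrMr ?ltr0n // mulrC.
Qed.

End Welfare.

Theorem theorem16 (R : realType) :
  (forall (d n m : nat) (V : 'I_n -> vecR R d) (C : 'I_m -> vecR R d)
          (p : 'I_m -> R),
      instance V C -> UProj2_output C p ->
      EUW V C p >= n%:R / d%:R)
  /\
  (exists K : R, 0 < K /\
     forall (d n m : nat) (V : 'I_n -> vecR R d) (C : 'I_m -> vecR R d)
            (p : 'I_m -> R),
       (1 <= d)%N -> instance V C -> UProj2_output C p ->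
       distortion V C p <= K * d%:R).
Proof.
split=> [d n m V C p | ]; first exact: UProj2_EUW_ge.
exists 1; split=> // d n m V C p d_gt0 inst p_opt.
by rewrite mul1r; exact: UProj2_distortion_le.
Qed.
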